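(* Fix an integer $p \geq 3$, put $\lambda=\lambda_p=2\cos(\pi/p)$, $S=\begin{pmatrix}1&\lambda\\0&1\end{pmatrix}$, $T=\begin{pmatrix}0&-1\\1&0\end{pmatrix}$ and $U=ST$. Suppose that $\alpha \in \mathbb{R}\cup\{\infty\}$ and $1 \leq i \leq p-1$. Then $\alpha \in \left[U^{p-i+1}(0), U^{p-i}(0)\right)$ if and only if $TU^{i}(\alpha) \in [0,\infty)$, and $\alpha = U^{p-i+1}(0)$ if and only if $TU^{i}(\alpha)=0$.
   Context: Matrices act on $\mathbb{R}\cup\{\infty\}$ as linear fractional transformations: $\begin{pmatrix}a&b\\c&d\end{pmatrix}(z)=\frac{az+b}{cz+d}$ with the usual conventions for $\infty$. One has $0=U^p(0)<U^{p-1}(0)<\cdots<U^2(0)<U(0)=\infty$, so the intervals are meaningful (with $[x,\infty)$ understood for the interval whose right endpoint is $U(0)=\infty$). *)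

From Stdlib Require Import Reals Lra.
Open Scope R_scope.

Inductive PR : Type := Fin (r : R) | Inf.

(** 2x2 real matrices [[a b];[c d]]. *)
Record Mat2 : Type := mkMat2 { ma : R; mb : R; mc : R; md : R }.

Definition mmul (X Y : Mat2) : Mat2 :=
  mkMat2 (ma X * ma Y + mb X * mc Y) (ma X * mb Y + mb X * md Y)
         (mc X * ma Y + md X * mc Y) (mc X * mb Y + md X * md Y).

Definition mid : Mat2 := mkMat2 1 0 0 1.

Fixpoint mpow (X : Mat2) (n : nat) : Mat2 :=
  match n with O => mid | S k => mmul X (mpow X k) end.

Definition act (X : Mat2) (z : PR) : PR :=
  match z with
  | Fin x =>
      let den := mc X * x + md X in
      if Req_EM_T den 0 then Inf else Fin ((ma X * x + mb X) / den)
  | Inf =>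
      if Req_EM_T (mc X) 0 then Inf else Fin (ma X / mc X)
  end.

(** Half-open interval [a, b) in R ∪ {∞}: its elements are real numbers r
    with a <= r and r < b, where b = ∞ means no upper constraint
    (so [x, ∞) is the real half-line, not containing ∞). *)
Definition in_Ico (a b z : PR) : Prop :=
  match a, z with
  | Fin ra, Fin r =>
      ra <= r /\ match b with Fin rb => r < rb | Inf => True end
  | _, _ => False
  end.

Definition lam (p : nat) : R := 2 * cos (PI / INR p).
Definition Smat (p : nat) : Mat2 := mkMat2 1 (lam p) 0 1.
Definition Tmat : Mat2 := mkMat2 0 (-1) 1 0.
Definition Umat (p : nat) : Mat2 := mmul (Smat p) Tmat.

(* Put t = PI / p and s x = sin (x t).  Then U = [[2 cos t, -1], [1, 0]], and the recurrence
   s (x + 1) + s (x - 1) = 2 cos t s x gives sin t U^n = [[s (n+1), -s n], [s n, -s (n-1)]].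
   Since s (p - x) = s x, this yields U^(p-i+1)(0) = s (i-1) / s i and U^(p-i)(0) = s i / s (i+1)
   (which is oo when i = p - 1), while T U^i acts as z |-> (s (i-1) - s i z) / (s (i+1) z - s i),
   a map of determinant s i ^ 2 - s (i+1) s (i-1) = sin t ^ 2 > 0.  Both equivalences then come
   from a sign analysis of this fraction. *)

From Stdlib Require Import Reals Lra Lia.
Open Scope R_scope.

(* The point of R \cup {oo} with homogeneous coordinates [a : b]. *)
Definition ratio (a b : R) : PR := if Req_EM_T b 0 then Inf else Fin (a / b).

Lemma act_Fin (M : Mat2) (x : R) :
  act M (Fin x) = ratio (ma M * x + mb M) (mc M * x + md M).
Proof. reflexivity. Qed.

Lemma act_Inf (M : Mat2) : act M Inf = ratio (ma M) (mc M).
Proof. reflexivity. Qed.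

Lemma ratio_nonzero (a b : R) : b <> 0 -> ratio a b = Fin (a / b).
Proof. intro hb. unfold ratio. destruct (Req_EM_T b 0); [contradiction | reflexivity]. Qed.

Lemma ratio_scale (c a b : R) : c <> 0 -> ratio (c * a) (c * b) = ratio a b.
Proof.
  intro hc. unfold ratio.
  destruct (Req_EM_T (c * b) 0) as [E|E], (Req_EM_T b 0) as [F|F]; try reflexivity.
  - destruct (Rmult_integral _ _ E); contradiction.
  - rewrite F, Rmult_0_r in E. contradiction.
  - f_equal. field. split; assumption.
Qed.

Definition mscale (c : R) (M : Mat2) : Mat2 :=
  mkMat2 (c * ma M) (c * mb M) (c * mc M) (c * md M).

Lemma act_mscale (c : R) (M : Mat2) (z : PR) : c <> 0 -> act (mscale c M) z = act M z.
Proof.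
  intro hc. destruct z as [x|]; rewrite ?act_Fin, ?act_Inf; cbn [mscale ma mb mc md].
  - rewrite <- (ratio_scale c (ma M * x + mb M)) by exact hc. f_equal; ring.
  - apply ratio_scale, hc.
Qed.

Lemma mmul_mscale_r (c : R) (X Y : Mat2) : mmul X (mscale c Y) = mscale c (mmul X Y).
Proof. unfold mmul, mscale; cbn. f_equal; ring. Qed.

Section HalfLinePreimage.

Variables A B C : R.
Hypothesis B_pos : 0 < B.
Hypothesis A_nonneg : 0 <= A.
Hypothesis AC_lt_BB : A * C < B * B.

Let M : Mat2 := mkMat2 (- B) C A (- B).

(* [B (A x - B) + A (C - B x) = A C - B^2 < 0]: the denominator and the
   numerator of [M x] are never both nonnegative. *)
Lemma act_Fin_nonneg_iff (x : R) :
  in_Ico (Fin 0) Inf (act M (Fin x)) <-> C <= B * x /\ A * x < B.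
Proof.
  rewrite act_Fin; cbn [M ma mb mc md]. unfold ratio.
  destruct (Req_EM_T (A * x + - B) 0) as [E|E]; cbn.
  - split; [tauto | lra].
  - set (q := (- B * x + C) / (A * x + - B)).
    assert (hq : q * (A * x + - B) = - B * x + C) by (unfold q; field; exact E).
    destruct (Rlt_or_le (A * x) B) as [L|L].
    + split; [intros [hq0 _] | intros [h1 _]]; split; try tauto.
      * pose proof (Rmult_le_pos q (B - A * x) hq0 ltac:(lra)). nra.
      * destruct (Rle_or_lt 0 q) as [|N]; [assumption|].
        pose proof (Rmult_lt_0_compat (- q) (B - A * x) ltac:(lra) ltac:(lra)). nra.
    + split; [intros [hq0 _] | lra]. exfalso.
      assert (hx : 0 < A * x - B) by lra.
      pose proof (Rmult_le_pos q (A * x - B) hq0 ltac:(lra)). nra.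
Qed.

Lemma in_Ico_ratio_iff (x : R) :
  in_Ico (ratio C B) (ratio B A) (Fin x) <-> C <= B * x /\ A * x < B.
Proof.
  rewrite ratio_nonzero by lra. unfold in_Ico, ratio.
  assert (eC : B * (C / B) = C) by (field; lra).
  destruct (Req_EM_T A 0) as [E|E].
  - rewrite E, Rmult_0_l. split; intros [h1 h2]; split; try tauto; nra.
  - assert (eB : A * (B / A) = B) by (field; exact E).
    split; intros [h1 h2]; split; nra.
Qed.

Lemma preimage_half_line (z : PR) :
  in_Ico (ratio C B) (ratio B A) z <-> in_Ico (Fin 0) Inf (act M z).
Proof.
  destruct z as [x|].
  - rewrite act_Fin_nonneg_iff. apply in_Ico_ratio_iff.
  - rewrite act_Inf; cbn [M ma mc]. rewrite ratio_nonzero by lra. unfold ratio.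
    destruct (Req_EM_T A 0) as [E|E]; cbn; split; try tauto.
    intros [h _]. assert (eB : A * (- B / A) = - B) by (field; exact E). nra.
Qed.

Lemma preimage_zero (z : PR) : z = ratio C B <-> act M z = Fin 0.
Proof.
  rewrite ratio_nonzero by lra.
  destruct z as [x|].
  - rewrite act_Fin; cbn [M ma mb mc md]. unfold ratio.
    destruct (Req_EM_T (A * x + - B) 0) as [E|E]; split; intro h; try discriminate.
    + injection h as ->. exfalso.
      assert (eC : B * (C / B) = C) by (field; lra). nra.
    + injection h as ->. f_equal. field. split; lra.
    + injection h as h. f_equal.
      assert (hx : - B * x + C = 0).
      { rewrite <- (Rmult_0_l (A * x + - B)), <- h. field. exact E. }
      replace C with (B * x) by lra. field. lra.
  - rewrite act_Inf; cbn [M ma mc]. unfold ratio.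
    destruct (Req_EM_T A 0) as [E|E]; split; intro h; try discriminate.
    injection h as h. exfalso.
    assert (eB : A * (- B / A) = - B) by (field; exact E). rewrite h in eB. lra.
Qed.

End HalfLinePreimage.

Lemma sin_add_add_sin_sub (a b : R) : sin (a + b) + sin (a - b) = 2 * cos b * sin a.
Proof. rewrite sin_plus, sin_minus. ring. Qed.

Lemma sin_add_mul_sin_sub (a b : R) : sin (a + b) * sin (a - b) = sin a ^ 2 - sin b ^ 2.
Proof.
  assert (ca : cos a ^ 2 = 1 - sin a ^ 2) by (rewrite <- (sin2_cos2 a); unfold Rsqr; ring).
  assert (cb : cos b ^ 2 = 1 - sin b ^ 2) by (rewrite <- (sin2_cos2 b); unfold Rsqr; ring).
  rewrite sin_plus, sin_minus.
  transitivity (sin a ^ 2 * cos b ^ 2 - cos a ^ 2 * sin b ^ 2); [ring|].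
  rewrite ca, cb. ring.
Qed.

Lemma sin_frac_PI_reflect (n x : R) : n <> 0 -> sin ((n - x) * (PI / n)) = sin (x * (PI / n)).
Proof.
  intro hn. rewrite <- sin_PI_x. f_equal. field. exact hn.
Qed.

Lemma sin_frac_PI_pos (n x : R) : 0 < x < n -> 0 < sin (x * (PI / n)).
Proof.
  intros [h0 h1]. pose proof PI_RGT_0. apply sin_gt_0.
  - apply Rmult_lt_0_compat; [lra | apply Rdiv_lt_0_compat; lra].
  - replace (x * (PI / n)) with (PI * (x / n)) by (field; lra).
    rewrite <- (Rmult_1_r PI) at 2. apply Rmult_lt_compat_l; [lra|].
    apply (Rmult_lt_reg_r n); [lra|]. replace (x / n * n) with x by (field; lra). lra.
Qed.

Lemma sin_frac_PI_nonneg (n x : R) : 0 < n -> 0 <= x <= n -> 0 <= sin (x * (PI / n)).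
Proof.
  intros hn [h0 h1]. pose proof PI_RGT_0. apply sin_ge_0.
  - apply Rmult_le_pos; [lra | left; apply Rdiv_lt_0_compat; lra].
  - replace (x * (PI / n)) with (PI * (x / n)) by (field; lra).
    rewrite <- (Rmult_1_r PI) at 2. apply Rmult_le_compat_l; [lra|].
    apply (Rmult_le_reg_r n); [lra|]. replace (x / n * n) with x by (field; lra). lra.
Qed.

Definition sine_mat (t x : R) : Mat2 :=
  mkMat2 (sin ((x + 1) * t)) (- sin (x * t)) (sin (x * t)) (- sin ((x - 1) * t)).

Lemma sine_mat_succ (t x : R) :
  mmul (mkMat2 (2 * cos t) (-1) 1 0) (sine_mat t x) = sine_mat t (x + 1).
Proof.
  assert (rec : forall y, sin ((y + 1) * t) = 2 * cos t * sin (y * t) - sin ((y - 1) * t)).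
  { intro y. rewrite <- (sin_add_add_sin_sub (y * t) t).
    replace ((y + 1) * t) with (y * t + t) by ring.
    replace ((y - 1) * t) with (y * t - t) by ring. ring. }
  unfold mmul, sine_mat; cbn. replace (x + 1 - 1) with x by ring.
  rewrite (rec (x + 1)), (rec x). replace (x + 1 - 1) with x by ring. f_equal; ring.
Qed.

Lemma mpow_chebyshev (t : R) (n : nat) :
  mscale (sin t) (mpow (mkMat2 (2 * cos t) (-1) 1 0) n) = sine_mat t (INR n).
Proof.
  induction n as [|n IH].
  - unfold mscale, sine_mat; cbn.
    replace ((0 - 1) * t) with (- t) by ring. rewrite sin_neg, Rmult_0_l, sin_0.
    replace ((0 + 1) * t) with t by ring. f_equal; ring.
  - cbn [mpow]. rewrite <- mmul_mscale_r, IH, S_INR. apply sine_mat_succ.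
Qed.

Lemma act_sine_mat_origin (t x : R) :
  act (sine_mat t x) (Fin 0) = ratio (sin (x * t)) (sin ((x - 1) * t)).
Proof.
  rewrite act_Fin; cbn [sine_mat ma mb mc md].
  rewrite <- (ratio_scale (-1) (sin (x * t))) by lra. f_equal; ring.
Qed.

Lemma Umat_eq (p : nat) : Umat p = mkMat2 (2 * cos (PI / INR p)) (-1) 1 0.
Proof. unfold Umat, Smat, Tmat, mmul, lam; cbn. f_equal; ring. Qed.

Section HeckeGenerator.

Variable p : nat.
Hypothesis p_gt1 : (1 < p)%nat.

Lemma sin_PI_div_pos : 0 < sin (PI / INR p).
Proof.
  rewrite <- (Rmult_1_l (PI / INR p)). apply sin_frac_PI_pos.
  split; [lra | apply (lt_INR 1), p_gt1].
Qed.

Lemma act_Upow (k : nat) (z : PR) :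
  act (mpow (Umat p) k) z = act (sine_mat (PI / INR p) (INR k)) z.
Proof.
  pose proof sin_PI_div_pos.
  rewrite <- mpow_chebyshev, act_mscale, Umat_eq by lra. reflexivity.
Qed.

Lemma act_TUpow (k : nat) (z : PR) :
  act (mmul Tmat (mpow (Umat p) k)) z =
  act (mkMat2 (- sin (INR k * (PI / INR p))) (sin ((INR k - 1) * (PI / INR p)))
              (sin ((INR k + 1) * (PI / INR p))) (- sin (INR k * (PI / INR p)))) z.
Proof.
  pose proof sin_PI_div_pos.
  rewrite <- (act_mscale (sin (PI / INR p))) by lra.
  rewrite <- mmul_mscale_r, Umat_eq, mpow_chebyshev. f_equal.
  unfold mmul, Tmat, sine_mat; cbn. f_equal; ring.
Qed.

Lemma act_Upow_reflect_origin (j : nat) : (j <= p)%nat ->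
  act (mpow (Umat p) (p - j)) (Fin 0) =
  ratio (sin (INR j * (PI / INR p))) (sin ((INR j + 1) * (PI / INR p))).
Proof.
  intro hj. assert (hp : INR p <> 0) by (apply not_0_INR; lia).
  rewrite act_Upow, act_sine_mat_origin, minus_INR by exact hj.
  replace (INR p - INR j - 1) with (INR p - (INR j + 1)) by ring.
  rewrite !sin_frac_PI_reflect by exact hp. reflexivity.
Qed.

End HeckeGenerator.

Theorem lemma1p1 (p : nat) (Hp : (3 <= p)%nat) (alpha : PR) (i : nat)
  (Hi1 : (1 <= i)%nat) (Hi2 : (i <= p - 1)%nat) :
  (in_Ico (act (mpow (Umat p) (p - i + 1)) (Fin 0))
          (act (mpow (Umat p) (p - i)) (Fin 0)) alpha
   <-> in_Ico (Fin 0) Inf (act (mmul Tmat (mpow (Umat p) i)) alpha))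
  /\
  (alpha = act (mpow (Umat p) (p - i + 1)) (Fin 0)
   <-> act (mmul Tmat (mpow (Umat p) i)) alpha = Fin 0).
Proof.
  assert (hi : 1 <= INR i /\ INR i + 1 <= INR p).
  { split; [apply (le_INR 1) | rewrite <- S_INR; apply le_INR]; lia. }
  replace (p - i + 1)%nat with (p - (i - 1))%nat by lia.
  rewrite !act_Upow_reflect_origin, !act_TUpow, minus_INR by lia.
  change (INR 1) with 1. replace (INR i - 1 + 1) with (INR i) by ring.
  pose proof (sin_PI_div_pos p ltac:(lia)) as sin_t_pos.
  set (t := PI / INR p) in *.
  set (A := sin ((INR i + 1) * t)).
  set (B := sin (INR i * t)).
  set (C := sin ((INR i - 1) * t)).
  assert (B_pos : 0 < B) by (apply sin_frac_PI_pos; lra).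
  assert (A_nonneg : 0 <= A) by (apply sin_frac_PI_nonneg; lra).
  assert (AC_lt_BB : A * C < B * B).
  { unfold A, C. rewrite Rmult_plus_distr_r, Rmult_minus_distr_r, Rmult_1_l.
    rewrite sin_add_mul_sin_sub. fold B. nra. }
  split; [apply preimage_half_line | apply preimage_zero]; assumption.
Qed.
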